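(* Let $k\ge2$, let $G$ be a $k$-player game and $M$ a $k$-partite Bell functional. Then for every $d\ge1$, $\omega^*_d(G)\le d^{k-1}\omega(G)$ and $\omega^*_d(M)\le(2d)^{k-1}\omega(M)$.
   Context: A $k$-partite Bell functional is a real array $M=(M_{x_1,\dots,x_k}^{a_1,\dots,a_k})$ indexed by finite question and answer sets for each party; a $k$-player game is one with nonnegative coefficients. $\omega(M)=\sup|\sum M_{x_1..x_k}^{a_1..a_k}P(a_1,\dots,a_k|x_1,\dots,x_k)|$ over the convex hull of products $P_1(a_1|x_1)\cdots P_k(a_k|x_k)$ of conditional probability distributions. $\omega^*_d(M)=\sup|\sum M_{x_1..x_k}^{a_1..a_k}\langle\psi|E_{x_1}^{a_1}\otimes\cdots\otimes E_{x_k}^{a_k}|\psi\rangle|$ over all $m\le d$, unit $|\psi\rangle\in(\mathbb C^m)^{\otimes k}$ and POVMs $\{E_{x_i}^{a_i}\}_{a_i}$ in $M_m$ for each party $i$. *)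

(* Complex numbers: an arbitrary numClosedFieldType C
   (e.g. algC). *)
From HB Require Import structures.
From mathcomp Require Import all_boot all_order all_algebra.
Set Implicit Arguments. Unset Strict Implicit. Unset Printing Implicit Defensive.
Import Order.TTheory GRing.Theory Num.Theory.
Local Open Scope ring_scope.

Section Bell.
Variable C : numClosedFieldType.
Variable k : nat.
Variables (nX nA : 'I_k -> nat).

Definition qtuple := {dffun forall i : 'I_k, 'I_(nX i)}.
Definition atuple := {dffun forall i : 'I_k, 'I_(nA i)}.

Definition bell_functional := qtuple -> atuple -> C.

Definition local_profile := forall i : 'I_k, 'I_(nX i) -> 'I_(nA i) -> C.

Definition is_cond_prob (P : local_profile) : Prop :=
  (forall i x a, 0 <= P i x a) /\ (forall i x, \sum_(a < nA i) P i x a = 1).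

Definition classical_val (M : bell_functional) (n : nat) (lam : 'I_n -> C)
    (P : 'I_n -> local_profile) : C :=
  \sum_(x : qtuple) \sum_(a : atuple)
     M x a * \sum_(j < n) lam j * \prod_(i < k) P j i (x i) (a i).

(* c is an upper bound of the set whose supremum is omega(M) *)
Definition classical_ub (M : bell_functional) (c : C) : Prop :=
  forall (n : nat) (lam : 'I_n -> C) (P : 'I_n -> local_profile),
    (forall j, 0 <= lam j) -> \sum_(j < n) lam j = 1 ->
    (forall j, is_cond_prob (P j)) ->
    `|classical_val M lam P| <= c.

Definition psd (m : nat) (A : 'M[C]_m) : Prop :=
  (forall r s, A s r = (A r s)^*) /\
  (forall v : 'I_m -> C, 0 <= \sum_(r < m) \sum_(s < m) (v r)^* * A r s * v s).

Definition is_povm (m : nat)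
    (E : forall i : 'I_k, 'I_(nX i) -> 'I_(nA i) -> 'M[C]_m) : Prop :=
  forall i x, (forall a, psd (E i x a)) /\ \sum_(a < nA i) E i x a = 1%:M.

(* vectors of (C^m)^{(x) k}, written in the product basis indexed by
   functions 'I_k -> 'I_m *)
Definition is_unit_state (m : nat) (psi : {ffun 'I_k -> 'I_m} -> C) : Prop :=
  \sum_(u : {ffun 'I_k -> 'I_m}) `|psi u| ^+ 2 = 1.

(* <psi| E_{x_1}^{a_1} (x) ... (x) E_{x_k}^{a_k} |psi>, entrywise *)
Definition tens_expect (m : nat) (psi : {ffun 'I_k -> 'I_m} -> C)
    (F : forall i : 'I_k, 'M[C]_m) : C :=
  \sum_(u : {ffun 'I_k -> 'I_m}) \sum_(v : {ffun 'I_k -> 'I_m})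
     (psi u)^* * (\prod_(i < k) F i (u i) (v i)) * psi v.

Definition quantum_val (M : bell_functional) (m : nat)
    (psi : {ffun 'I_k -> 'I_m} -> C)
    (E : forall i : 'I_k, 'I_(nX i) -> 'I_(nA i) -> 'M[C]_m) : C :=
  \sum_(x : qtuple) \sum_(a : atuple)
     M x a * tens_expect psi (fun i => E i (x i) (a i)).

(* every value in the set whose supremum is omega*_d(M) is <= B *)
Definition quantum_bounded (M : bell_functional) (d : nat) (B : C) : Prop :=
  forall (m : nat) (psi : {ffun 'I_k -> 'I_m} -> C)
         (E : forall i : 'I_k, 'I_(nX i) -> 'I_(nA i) -> 'M[C]_m),
    (m <= d)%N -> is_unit_state psi -> is_povm E ->
    `|quantum_val M psi E| <= B.

End Bell.

(* Index the product basis of (C^m)^(x)k by the first coordinate and the tail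
   w in [m]^(k-1), and split psi = \sum_w psi_w into its m^(k-1) slices.  Between
   two slices a product operator E_1 (x) ... (x) E_k factorizes as the form of E_1
   (tensored with the all-ones kernel) on psi_w1, psi_w2, times the entries
   (E_i)_(w1_i, w2_i) of the other parties; summed against M this is the value of
   M on a product of local functions.
   For a game the operator is positive semidefinite, so Cauchy-Schwarz over the
   m^(k-1) slices leaves only the diagonal terms, which are classical values scaled
   by |psi_w|^2.  For a real functional the value is real; writing every entry as
   Re + i Im and moving the powers of i to the first party turns each term into
   2^(k-1) values of M on real local functions of l1-norm at most 1, and at most
   (|psi_w1|^2 + |psi_w2|^2)/2 for the first party.  Splitting real local
   functions into positive and negative parts bounds such a value by the product
   of the l1-norms times omega(M). *)

From HB Require Import structures.
From mathcomp Require Import all_boot all_order all_algebra.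
From mathcomp Require Import ring sesquilinear spectral.
Set Implicit Arguments. Unset Strict Implicit. Unset Printing Implicit Defensive.
Import Order.TTheory GRing.Theory Num.Theory.
Local Open Scope ring_scope.

Section SesquilinearForm.
Variables (C : numClosedFieldType) (I : finType).
Implicit Types (K : I -> I -> C) (f g : I -> C).

Definition sform K f g : C := \sum_u \sum_v (f u)^* * K u v * g v.

Definition hermitian_kernel K := forall u v, K v u = (K u v)^*.

Definition psd_kernel K := forall f, 0 <= sform K f f.

Lemma eq_sform K f f' g g' : f =1 f' -> g =1 g' -> sform K f g = sform K f' g'.
Proof. by move=> ef eg; apply: eq_bigr => u _; apply: eq_bigr => v _; rewrite ef eg. Qed.

Lemma eq_sform_kernel K K' f g : (forall u v, K u v = K' u v) ->
  sform K f g = sform K' f g.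
Proof. by move=> eK; apply: eq_bigr => u _; apply: eq_bigr => v _; rewrite eK. Qed.

Lemma sform_suml (J : finType) K (h : J -> I -> C) g :
  sform K (fun u => \sum_j h j u) g = \sum_j sform K (h j) g.
Proof.
rewrite /sform [RHS]exchange_big; apply: eq_bigr => u _ /=.
rewrite [RHS]exchange_big; apply: eq_bigr => v _ /=.
by rewrite rmorph_sum !mulr_suml.
Qed.

Lemma sform_sumr (J : finType) K (h : J -> I -> C) f :
  sform K f (fun u => \sum_j h j u) = \sum_j sform K f (h j).
Proof.
rewrite /sform [RHS]exchange_big; apply: eq_bigr => u _ /=.
rewrite [RHS]exchange_big; apply: eq_bigr => v _ /=.
by rewrite !mulr_sumr.
Qed.

Lemma sform_sum_kernel (J : finType) (K : J -> I -> I -> C) f g :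
  \sum_j sform (K j) f g = sform (fun u v => \sum_j K j u v) f g.
Proof.
rewrite /sform exchange_big; apply: eq_bigr => u _.
rewrite exchange_big; apply: eq_bigr => v _.
by rewrite mulr_sumr mulr_suml.
Qed.

Lemma sform_scale_kernel c K f g :
  c * sform K f g = sform (fun u v => c * K u v) f g.
Proof.
rewrite /sform mulr_sumr; apply: eq_bigr => u _; rewrite mulr_sumr.
by apply: eq_bigr => v _; ring.
Qed.

Lemma sformZl K c f g : sform K (fun u => c * f u) g = c^* * sform K f g.
Proof.
rewrite /sform mulr_sumr; apply: eq_bigr => u _; rewrite mulr_sumr.
by apply: eq_bigr => v _; rewrite rmorphM /=; ring.
Qed.

Lemma sformZr K c f g : sform K f (fun u => c * g u) = c * sform K f g.
Proof.
rewrite /sform mulr_sumr; apply: eq_bigr => u _; rewrite mulr_sumr.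
by apply: eq_bigr => v _; ring.
Qed.

Lemma sformBB K f g : sform K (fun u => f u - g u) (fun u => f u - g u) =
  sform K f f - sform K f g - sform K g f + sform K g g.
Proof.
rewrite /sform -!sumrB -big_split /=; apply: eq_bigr => u _.
rewrite -!sumrB -big_split /=; apply: eq_bigr => v _.
rewrite rmorphB /=; ring.
Qed.

Lemma sform_conj K f g : hermitian_kernel K -> (sform K f g)^* = sform K g f.
Proof.
move=> hK; rewrite /sform rmorph_sum exchange_big /=; apply: eq_bigr => u _.
rewrite rmorph_sum; apply: eq_bigr => v _.
by rewrite !rmorphM /= conjCK hK conjCK; ring.
Qed.

Lemma sform_delta K r s :
  sform K (fun t => (t == r)%:R) (fun t => (t == s)%:R) = K r s.
Proof.
rewrite /sform (bigD1 r) //= [X in _ + X]big1 => [|u ur]; last first.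
  by rewrite (negPf ur) big1 // => v _; rewrite rmorph0 !mul0r.
rewrite eqxx rmorph1 addr0 (bigD1 s) //= [X in _ + X]big1 => [|v vs]; last first.
  by rewrite (negPf vs) mulr0.
by rewrite eqxx mul1r mulr1 addr0.
Qed.

(* Expand [0 <= \sum_(j1, j2) sform K (h j1 - h j2) (h j1 - h j2)]. *)
Lemma sform_sum_le (J : finType) K (h : J -> I -> C) : psd_kernel K ->
  sform K (fun u => \sum_j h j u) (fun u => \sum_j h j u)
   <= #|J|%:R * \sum_j sform K (h j) (h j).
Proof.
move=> pK; set D := \sum_j sform K (h j) (h j).
set X := \sum_j1 \sum_j2 sform K (h j1) (h j2).
have diff_ge0 : 0 <= \sum_(j1 : J) \sum_(j2 : J)
    sform K (fun u => h j1 u - h j2 u) (fun u => h j1 u - h j2 u).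
  by apply: sumr_ge0 => j1 _; apply: sumr_ge0 => j2 _; apply: pK.
have diff_sum : \sum_(j1 : J) \sum_(j2 : J)
    sform K (fun u => h j1 u - h j2 u) (fun u => h j1 u - h j2 u)
    = 2%:R * (#|J|%:R * D - X).
  have diag_l : \sum_(j1 : J) \sum_(j2 : J) sform K (h j1) (h j1) = #|J|%:R * D.
    by rewrite /D mulr_sumr; apply: eq_bigr => j _; rewrite sumr_const mulr_natl.
  have diag_r : \sum_(j1 : J) \sum_(j2 : J) sform K (h j2) (h j2) = #|J|%:R * D.
    by rewrite sumr_const mulr_natl.
  have swap : \sum_(j1 : J) \sum_(j2 : J) sform K (h j2) (h j1) = X.
    by rewrite exchange_big.
  have sum4 (a b c d : J -> J -> C) :
      \sum_j1 \sum_j2 (a j1 j2 - b j1 j2 - c j1 j2 + d j1 j2) =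
      \sum_j1 \sum_j2 a j1 j2 - \sum_j1 \sum_j2 b j1 j2 - \sum_j1 \sum_j2 c j1 j2
      + \sum_j1 \sum_j2 d j1 j2.
    rewrite -!sumrB -big_split /=; apply: eq_bigr => j1 _.
    by rewrite -!sumrB -big_split.
  under eq_bigr => j1 _ do under eq_bigr => j2 _ do rewrite sformBB.
  by rewrite sum4 diag_l diag_r swap -/X; ring.
rewrite sform_suml; under eq_bigr => j _ do rewrite sform_sumr.
rewrite -/X -subr_ge0; move: diff_ge0; rewrite diff_sum.
by rewrite pmulr_rge0 // ltr0n.
Qed.

Lemma normr_sform_le K f g : hermitian_kernel K -> psd_kernel K ->
  `|sform K f g| <= (sform K f f + sform K g g) / 2%:R.
Proof.
move=> hK pK; set z := sform K f g.
have [->|nz] := eqVneq z 0; first by rewrite normr0 divr_ge0 ?addr_ge0 ?ler0n.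
have nz' : `|z| != 0 by rewrite normr_eq0.
(* rotate [g] by the phase of [z] so that the cross term becomes [|z|] *)
set c := z^* / `|z|.
have cz : c * z = `|z| by rewrite /c mulrAC -normCKC expr2 mulfK.
have cc : c^* * c = 1.
  by rewrite -normCKC /c normrM normfV norm_conjC normr_id divff // expr1n.
have czc : c^* * z^* = `|z| by rewrite -rmorphM /= cz conj_normC.
have := pK (fun u => f u - c * g u).
rewrite sformBB sformZl sformZr sformZl sformZr -/z -[sform K g f](sform_conj _ _ hK) -/z.
rewrite mulrA cc mul1r cz czc => H.
rewrite ler_pdivlMr ?ltr0n // -subr_ge0.
by move: H; congr (_ <= _); ring.
Qed.

End SesquilinearForm.

Lemma sform_gram (C : numClosedFieldType) (I L : finType) (p : L -> I -> C)
    (c : L -> C) (f : I -> C) :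
  sform (fun r s => \sum_l (p l r)^* * c l * p l s) f f =
  \sum_l c l * `|\sum_s p l s * f s| ^+ 2.
Proof.
transitivity (\sum_l \sum_r \sum_s (f r)^* * (p l r)^* * c l * p l s * f s).
  rewrite /sform [RHS]exchange_big /=; apply: eq_bigr => r _.
  rewrite [RHS]exchange_big /=; apply: eq_bigr => s _.
  by rewrite mulr_sumr mulr_suml; apply: eq_bigr => l _; ring.
apply: eq_bigr => l _; rewrite normCKC rmorph_sum big_distrl mulr_sumr /=.
apply: eq_bigr => r _; rewrite mulr_sumr mulr_sumr; apply: eq_bigr => s _.
by rewrite rmorphM /=; ring.
Qed.

Section PsdMatrix.
Variable C : numClosedFieldType.

Lemma psd_kernel_mx m (A : 'M[C]_m) : psd A -> psd_kernel (fun r s => A r s).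
Proof. by case. Qed.

Lemma hermitian_kernel_mx m (A : 'M[C]_m) : psd A -> hermitian_kernel (fun r s => A r s).
Proof. by case=> h _ u v; rewrite h. Qed.

Lemma psd1 m : psd (1%:M : 'M[C]_m).
Proof.
split=> [r s|v]; first by rewrite !mxE eq_sym rmorph_nat.
apply: sumr_ge0 => r _; rewrite (bigD1 r) //= big1 => [|s rs]; last first.
  by rewrite mxE eq_sym (negPf rs) mulr0 mul0r.
by rewrite mxE eqxx mulr1 addr0 -normCKC exprn_ge0.
Qed.

Lemma psd_diag_ge0 m (A : 'M[C]_m) r : psd A -> 0 <= A r r.
Proof.
by move=> pA; have := psd_kernel_mx pA (fun t => (t == r)%:R); rewrite sform_delta.
Qed.

Lemma normr_psd_entry_le m (A : 'M[C]_m) r s : psd A ->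
  `|A r s| <= (A r r + A s s) / 2%:R.
Proof.
move=> pA; have := normr_sform_le (fun t => (t == r)%:R) (fun t => (t == s)%:R)
  (hermitian_kernel_mx pA) (psd_kernel_mx pA).
by rewrite !sform_delta.
Qed.

Lemma psd_spectral m (A : 'M[C]_m) : psd A ->
  (forall j, 0 <= spectral_diag A 0 j) /\
  forall r s, A r s = \sum_j (spectralmx A j r)^* * spectral_diag A 0 j * spectralmx A j s.
Proof.
move=> pA; set P := spectralmx A; set sp := spectral_diag A.
have hA : (A ^t* )%sesqui = A.
  by apply/matrixP => r s; rewrite !mxE; case: pA => h _; rewrite h conjCK.
have U : P \is unitarymx by apply: spectral_unitarymx.
have A_spectral : forall r s, A r s = \sum_j (P j r)^* * sp 0 j * P j s.
  have nA : A \is normalmx by apply/normalmxP; rewrite hA.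
  move=> r s; rewrite {1}(orthomx_spectralP nA) invmx_unitary // mxE.
  by apply: eq_bigr => j _; rewrite mul_mx_diag !mxE.
split=> // j.
have P_orth l : \sum_s P l s * (P j s)^* = (l == j)%:R.
  move/unitarymxP: U => /matrixP/(_ l j); rewrite !mxE => <-.
  by apply: eq_bigr => s _; rewrite !mxE.
have := psd_kernel_mx pA (fun s => (P j s)^*).
rewrite (eq_sform_kernel (K' := fun r s => \sum_l (P l r)^* * sp 0 l * P l s)) //.
rewrite sform_gram (bigD1 j) //= P_orth eqxx normr1 expr1n mulr1.
by rewrite big1 ?addr0 // => l lj; rewrite P_orth (negPf lj) normr0 expr0n mulr0.
Qed.

Lemma psd_kernel_tensor n m (F : 'I_n -> 'M[C]_m) : (forall i, psd (F i)) ->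
  psd_kernel (fun u v : {ffun 'I_n -> 'I_m} => \prod_i F i (u i) (v i)).
Proof.
move=> pF h; pose sp i j := spectral_diag (F i) 0 j; pose P i := spectralmx (F i).
rewrite (eq_sform_kernel (K' := fun u v : {ffun 'I_n -> 'I_m} => \sum_(J : {ffun 'I_n -> 'I_m})
   (\prod_i P i (J i) (u i))^* * (\prod_i sp i (J i)) * \prod_i P i (J i) (v i))) //.
  rewrite sform_gram; apply: sumr_ge0 => J _; rewrite mulr_ge0 ?exprn_ge0 //.
  by apply: prodr_ge0 => i _; case: (psd_spectral (pF i)) => ->.
move=> u v; transitivity (\prod_i \sum_j (P i j (u i))^* * sp i j * P i j (v i)).
  by apply: eq_bigr => i _; case: (psd_spectral (pF i)) => _ ->.
rewrite bigA_distr_bigA; apply: eq_bigr => J _.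
by rewrite rmorph_prod -!big_split.
Qed.

End PsdMatrix.

Section SignedSplit.
Variables (C : numClosedFieldType) (n : nat) (a0 : 'I_n) (q : 'I_n -> C) (N : C).
Hypotheses (q_real : forall a, q a \is Num.real) (q_le : \sum_a `|q a| <= N).

(* [q = split_part false - split_part true]: positive and negative parts of [q],
   both padded at [a0] so that their sums only depend on [N] and [\sum_a q a]. *)
Definition split_part (neg : bool) (a : 'I_n) : C :=
  (`|q a| + (if neg then - q a else q a)) / 2%:R
  + (a == a0)%:R * ((N - \sum_b `|q b|) / 2%:R).

Lemma split_part_ge0 neg a : 0 <= split_part neg a.
Proof.
have norm_add_ge0 (z : C) : z \is Num.real -> 0 <= `|z| + z.
  by move=> zr; rewrite -[X in _ + X]opprK subr_ge0 -normrN real_ler_norm ?rpredN.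
apply: addr_ge0; last by rewrite mulr_ge0 ?ler0n // divr_ge0 ?ler0n // subr_ge0.
rewrite divr_ge0 ?ler0n //; case: neg; last exact: norm_add_ge0.
by rewrite -normrN; apply: norm_add_ge0; rewrite rpredN.
Qed.

Lemma sum_split_part neg :
  \sum_a split_part neg a = (N + (if neg then - \sum_a q a else \sum_a q a)) / 2%:R.
Proof.
have indicator : \sum_a (a == a0)%:R = 1 :> C.
  by rewrite (bigD1 a0) //= eqxx big1 ?addr0 // => a /negPf ->.
rewrite big_split /= -!mulr_suml indicator big_split /=.
by case: neg; rewrite ?sumrN; field.
Qed.

Lemma split_partE a : q a = split_part false a - split_part true a.
Proof. by rewrite /split_part; field. Qed.

End SignedSplit.

Section ClassicalBounds.
Variables (C : numClosedFieldType) (k : nat) (nX nA : 'I_k -> nat).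
Variables (M : bell_functional C nX nA) (w : C).
Hypothesis M_ub : classical_ub M w.

Definition product_val (Q : local_profile C nX nA) : C :=
  \sum_(x : qtuple nX) \sum_(a : atuple nA) M x a * \prod_i Q i (x i) (a i).

Lemma classical_ub_profile P : is_cond_prob P -> `|product_val P| <= w.
Proof.
move=> cP; have := @M_ub 1 (fun _ => 1) (fun _ => P) (fun _ => ler01).
rewrite big_ord1 => /(_ erefl (fun _ => cP)); congr (`|_| <= _).
by apply: eq_bigr => x _; apply: eq_bigr => a _; rewrite big_ord1 mul1r.
Qed.

Lemma classical_ub_ge0 : (forall i, 'I_(nX i) -> (0 < nA i)%N) -> 0 <= w.
Proof.
move=> nA_gt0; pose det i x a : C := (a == Ordinal (nA_gt0 i x))%:R.
apply: le_trans (normr_ge0 (product_val det)) (classical_ub_profile _).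
split=> [i x a|i x]; first exact: ler0n.
rewrite /det (bigD1 (Ordinal (nA_gt0 i x))) //= big1 ?addr0 // => a ax.
by rewrite (negPf ax).
Qed.

(* Dividing each [P i] by its mass [p i] gives a conditional distribution; a zero
   mass makes both sides vanish. *)
Lemma classical_ub_scaled P (p : 'I_k -> C) :
  (forall i x a, 0 <= P i x a) -> (forall i x, \sum_a P i x a = p i) ->
  (forall i, 0 <= p i) ->
  `|product_val P| <= (\prod_i p i) * w.
Proof.
move=> P_ge0 P_sum p_ge0.
case: (pickP (fun i => p i == 0)) => [i /eqP p0|p_neq0].
  have P0 x a : P i x a = 0.
    by have := P_sum i x; rewrite p0 => /(psumr_eq0P (fun a _ => P_ge0 i x a)) ->.
  rewrite /product_val big1 ?normr0 => [|x _]; last first.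
    by rewrite big1 // => a _; rewrite (bigD1 i) //= P0 mul0r mulr0.
  by rewrite (bigD1 i) //= p0 !mul0r.
have p_gt0 i : 0 < p i by rewrite lt_def p_neq0 p_ge0.
pose P' i x a := P i x a / p i.
have cP : is_cond_prob P'.
  split=> [i x a|i x]; first exact: divr_ge0 (P_ge0 i x a) (ltW (p_gt0 i)).
  by rewrite /P' -mulr_suml P_sum divff ?gt_eqF.
have -> : product_val P = (\prod_i p i) * product_val P'.
  rewrite /product_val mulr_sumr; apply: eq_bigr => x _.
  rewrite mulr_sumr; apply: eq_bigr => a _; rewrite mulrCA -big_split /=.
  by congr (_ * _); apply: eq_bigr => i _; rewrite /P' mulrC divfK ?gt_eqF.
rewrite normrM ger0_norm ?prodr_ge0 //.
by rewrite ler_pM2l ?prodr_gt0 ?classical_ub_profile.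
Qed.

(* Split every [Q i] into positive and negative parts and expand the product
   into [2^k] nonnegative profiles, each bounded by [classical_ub_scaled]. *)
Lemma classical_ub_signed Q (s N : 'I_k -> C) :
  (forall i, 'I_(nX i) -> (0 < nA i)%N) ->
  (forall i x a, Q i x a \is Num.real) ->
  (forall i x, \sum_a Q i x a = s i) ->
  (forall i x, \sum_a `|Q i x a| <= N i) ->
  (forall i, s i \is Num.real) -> (forall i, `|s i| <= N i) ->
  `|product_val Q| <= (\prod_i N i) * w.
Proof.
move=> nA_gt0 Q_real Q_sum Q_le s_real s_le.
pose Qs (b : {ffun 'I_k -> bool}) : local_profile C nX nA := fun i x =>
  split_part (Ordinal (nA_gt0 i x)) (Q i x) (N i) (b i).
pose mass (b : {ffun 'I_k -> bool}) i := (N i + (if b i then - s i else s i)) / 2%:R.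
pose sign (b : {ffun 'I_k -> bool}) := \prod_i (if b i then -1 else 1 : C).
have Q_bool i x a : Q i x a = \sum_(neg : bool)
    (if neg then -1 else 1) * split_part (Ordinal (nA_gt0 i x)) (Q i x) (N i) neg a.
  by rewrite big_bool /= mulN1r mul1r addrC [LHS](split_partE (Ordinal (nA_gt0 i x)) _ (N i)).
have Q_expand : product_val Q = \sum_b sign b * product_val (Qs b).
  rewrite /product_val; under eq_bigr => x _ do under eq_bigr => a _ do
    rewrite (eq_bigr _ (fun i _ => Q_bool i (x i) (a i))) bigA_distr_bigA mulr_sumr.
  under eq_bigr => x _ do rewrite exchange_big /=.
  rewrite exchange_big /=; apply: eq_bigr => b _.
  rewrite mulr_sumr; apply: eq_bigr => x _; rewrite mulr_sumr; apply: eq_bigr => a _.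
  by rewrite big_split /= mulrCA.
have mass_sum : \prod_i N i = \sum_b \prod_i mass b i.
  transitivity (\prod_i \sum_(neg : bool) (N i + (if neg then - s i else s i)) / 2%:R).
    by apply: eq_bigr => i _; rewrite big_bool /=; field.
  by rewrite bigA_distr_bigA.
rewrite Q_expand mass_sum mulr_suml (le_trans (ler_norm_sum _ _ _)) //.
apply: ler_sum => b _; rewrite normrM normr_prod big1 ?mul1r => [|i _]; last first.
  by case: (b i); rewrite ?normrN normr1.
apply: classical_ub_scaled => [i x a|i x|i].
- exact: split_part_ge0.
- by rewrite sum_split_part Q_sum.
rewrite divr_ge0 ?ler0n //; case: (b i).
  by rewrite subr_ge0 (le_trans (real_ler_norm _) (s_le i)).
by rewrite -[s i]opprK subr_ge0 (le_trans _ (s_le i)) // -normrN real_ler_norm ?rpredN.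
Qed.

End ClassicalBounds.

Section Slices.
Variables (C : numClosedFieldType) (k m : nat).
Local Notation T := {ffun 'I_k.+1 -> 'I_m}.
Local Notation W := {ffun 'I_k -> 'I_m}.
Implicit Types (f g : T -> C) (w : W) (A : 'M[C]_m).

Definition tail (u : T) : W := [ffun j => u (lift ord0 j)].

Definition slice w f : T -> C := fun u => if tail u == w then f u else 0.

(* [A] acting on the first factor, tensored with the all-ones kernel on the others *)
Definition head_kernel A : T -> T -> C := fun u v => A (u ord0) (v ord0).

Definition head_marginal f (r : 'I_m) : C := \sum_(u : T | u ord0 == r) f u.

Lemma sum_slice f u : \sum_w slice w f u = f u.
Proof.
rewrite /slice (bigD1 (tail u)) //= eqxx big1 ?addr0 // => w.
by rewrite eq_sym => /negPf ->.
Qed.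

Lemma tail_inj (u v : T) : u ord0 = v ord0 -> tail u = tail v -> u = v.
Proof.
move=> e0 etail; apply/ffunP => i; case: (unliftP ord0 i) => [j ->|->] //.
by have := congr1 (fun w : W => w j) etail; rewrite !ffunE.
Qed.

Lemma sform_head_kernel A f g :
  sform (head_kernel A) f g = sform (fun r s => A r s) (head_marginal f) (head_marginal g).
Proof.
have sum_by_head (F : T -> C) : \sum_u F u = \sum_r \sum_(u : T | u ord0 == r) F u.
  exact: (partition_big (fun u : T => u ord0) predT).
rewrite /sform sum_by_head; apply: eq_bigr => r _.
under [RHS]eq_bigr => s _ do rewrite rmorph_sum !mulr_suml.
rewrite [RHS]exchange_big /=; apply: eq_bigr => u /eqP u0.
rewrite sum_by_head; apply: eq_bigr => s _; rewrite mulr_sumr; apply: eq_bigr => v /eqP v0.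
by rewrite /head_kernel u0 v0.
Qed.

Lemma psd_kernel_head A : psd A -> psd_kernel (head_kernel A).
Proof. by move=> pA f; rewrite sform_head_kernel; apply: psd_kernel_mx. Qed.

Lemma hermitian_kernel_head A : psd A -> hermitian_kernel (head_kernel A).
Proof. by move=> pA u v; apply: hermitian_kernel_mx. Qed.

Lemma sum_sform_head_kernel (J : finType) (A : J -> 'M[C]_m) f g :
  \sum_j sform (head_kernel (A j)) f g = sform (head_kernel (\sum_j A j)) f g.
Proof.
rewrite sform_sum_kernel; apply: eq_sform_kernel => u v.
by rewrite /head_kernel summxE.
Qed.

Lemma sform_tensor_slice (F : 'I_k.+1 -> 'M[C]_m) w1 w2 f g :
  sform (fun u v : T => \prod_i F i (u i) (v i)) (slice w1 f) (slice w2 g) =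
  sform (head_kernel (F ord0)) (slice w1 f) (slice w2 g)
  * \prod_j F (lift ord0 j) (w1 j) (w2 j).
Proof.
rewrite /sform mulr_suml; apply: eq_bigr => u _; rewrite mulr_suml; apply: eq_bigr => v _.
rewrite /slice; case: eqP => [tu|_]; last by rewrite rmorph0 !mul0r.
case: eqP => [tv|_]; last by rewrite !mulr0 mul0r.
rewrite big_ord_recl /head_kernel -tu -tv.
under [in RHS]eq_bigr => j _ do rewrite !ffunE.
by ring.
Qed.

Lemma sform_head_kernel1_slice w f :
  sform (head_kernel 1%:M) (slice w f) (slice w f) = \sum_u `|slice w f u| ^+ 2.
Proof.
rewrite /sform; apply: eq_bigr => u _.
rewrite (bigD1 u) //= /head_kernel mxE eqxx mulr1 normCKC big1 ?addr0 // => v vu.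
rewrite mxE /slice.
have [tu|_] := eqVneq (tail u) w; last by rewrite rmorph0 !mul0r.
have [tv|_] := eqVneq (tail v) w; last by rewrite mulr0.
have [e0|_] := eqVneq (u ord0) (v ord0); last by rewrite mulr0 mul0r.
by move: vu; rewrite (tail_inj (esym e0)) ?eqxx // tu tv.
Qed.

Lemma sum_slice_head_kernel1 f :
  \sum_w sform (head_kernel 1%:M) (slice w f) (slice w f) = \sum_u `|f u| ^+ 2.
Proof.
under eq_bigr => w _ do rewrite sform_head_kernel1_slice.
rewrite exchange_big /=; apply: eq_bigr => u _.
rewrite (bigD1 (tail u)) //= big1 ?addr0 /slice ?eqxx // => w.
by rewrite eq_sym => /negPf ->; rewrite normr0 expr0n.
Qed.

End Slices.

Section RealImaginaryParts.
Variable C : numClosedFieldType.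

Definition reim (imag : bool) (z : C) := if imag then 'Im z else 'Re z.

Lemma reim_real imag z : reim imag z \is Num.real.
Proof. by case: imag; [exact: Creal_Im | exact: Creal_Re]. Qed.

Lemma reim_sum imag (J : finType) (F : J -> C) :
  reim imag (\sum_j F j) = \sum_j reim imag (F j).
Proof. by case: imag; rewrite /= raddf_sum. Qed.

Lemma normr_Re_le (z : C) : `|'Re z| <= `|z|.
Proof. by case: (leif_normC_Re_Creal z). Qed.

Lemma normr_reim_le imag z : `|reim imag z| <= `|z|.
Proof.
case: imag; last exact: normr_Re_le.
by rewrite /= -normrN -ReMil (le_trans (normr_Re_le _)) // normrM normCi mul1r.
Qed.

Definition phase k (b : {ffun 'I_k -> bool}) : C := \prod_j (if b j then 'i else 1).

Lemma normr_phase k (b : {ffun 'I_k -> bool}) : `|phase b| = 1.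
Proof. by rewrite normr_prod big1 // => j _; case: (b j); rewrite ?normCi ?normr1. Qed.

Lemma normr_Re_phase_le k (b : {ffun 'I_k -> bool}) z : `|'Re (phase b * z)| <= `|z|.
Proof. by rewrite (le_trans (normr_Re_le _)) // normrM normr_phase mul1r. Qed.

(* Expand each [Z j = 'Re (Z j) + 'i * 'Im (Z j)]; the powers of ['i] go into [R]. *)
Lemma Re_mul_prod k (R : C) (Z : 'I_k -> C) :
  'Re (R * \prod_j Z j) =
  \sum_(b : {ffun 'I_k -> bool}) 'Re (phase b * R) * \prod_j reim (b j) (Z j).
Proof.
have -> : \prod_j Z j = \prod_j \sum_(imag : bool) (if imag then 'i else 1) * reim imag (Z j).
  by apply: eq_bigr => j _; rewrite big_bool /= mul1r addrC -Crect.
rewrite bigA_distr_bigA mulr_sumr raddf_sum; apply: eq_bigr => b _ /=.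
rewrite big_split /= mulrA [R * _]mulrC ReMr //.
by apply: rpred_prod => j _; exact: reim_real.
Qed.

End RealImaginaryParts.

Arguments phase {C k}.

Lemma unit_state_dim_gt0 (C : numClosedFieldType) k m (psi : {ffun 'I_k.+1 -> 'I_m} -> C) :
  is_unit_state psi -> (0 < m)%N.
Proof.
move=> psi_unit; rewrite lt0n; apply/negP => /eqP m0.
move: psi_unit; rewrite /is_unit_state big1.
  by move/eqP; rewrite eq_sym oner_eq0.
by move=> u; case: (u ord0) => r; rewrite m0.
Qed.

Section QuantumBounds.
Variables (C : numClosedFieldType) (k : nat) (nX nA : 'I_k.+1 -> nat) (m : nat).
Variables (psi : {ffun 'I_k.+1 -> 'I_m} -> C)
          (E : forall i : 'I_k.+1, 'I_(nX i) -> 'I_(nA i) -> 'M[C]_m).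
Arguments E : clear implicits.
Hypotheses (psi_unit : is_unit_state psi) (E_povm : is_povm E).
Local Notation T := {ffun 'I_k.+1 -> 'I_m}.
Local Notation W := {ffun 'I_k -> 'I_m}.

Lemma povm_entry_sum i x r s : \sum_a E i x a r s = (r == s)%:R.
Proof. by rewrite -summxE (E_povm x).2 mxE. Qed.

Lemma povm_answers_gt0 i : 'I_(nX i) -> (0 < nA i)%N.
Proof.
move=> x; rewrite lt0n; apply/negP => /eqP nA0.
pose r0 := Ordinal (unit_state_dim_gt0 psi_unit).
have := povm_entry_sum x r0 r0; rewrite eqxx big1 => [/eqP|a].
  by rewrite eq_sym oner_eq0.
by have := ltn_ord a; rewrite {2}nA0.
Qed.

Definition obs_kernel (M : bell_functional C nX nA) (u v : T) : C :=
  \sum_x \sum_a M x a * \prod_i E i (x i) (a i) (u i) (v i).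

Lemma sform_obs_kernel M f g : sform (obs_kernel M) f g =
  \sum_x \sum_a M x a * sform (fun u v : T => \prod_i E i (x i) (a i) (u i) (v i)) f g.
Proof.
rewrite -sform_sum_kernel; apply: eq_bigr => x _.
by rewrite -sform_sum_kernel; apply: eq_bigr => a _; rewrite sform_scale_kernel.
Qed.

Lemma quantum_val_sform M : quantum_val M psi E = sform (obs_kernel M) psi psi.
Proof. by rewrite sform_obs_kernel. Qed.

Definition slice_mass (w : W) : C := sform (head_kernel 1%:M) (slice w psi) (slice w psi).

Lemma slice_mass_ge0 w : 0 <= slice_mass w.
Proof. exact/psd_kernel_head/psd1. Qed.

Lemma sum_slice_mass : \sum_w slice_mass w = 1.
Proof. by rewrite sum_slice_head_kernel1. Qed.

Definition block_profile (w1 w2 : W) : local_profile C nX nA := fun i x a =>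
  if unlift ord0 i is Some j then E i x a (w1 j) (w2 j)
  else sform (head_kernel (E i x a)) (slice w1 psi) (slice w2 psi).
Arguments block_profile : clear implicits.

Lemma sform_obs_kernel_slice M w1 w2 :
  sform (obs_kernel M) (slice w1 psi) (slice w2 psi) = product_val M (block_profile w1 w2).
Proof.
rewrite sform_obs_kernel; apply: eq_bigr => x _; apply: eq_bigr => a _.
rewrite sform_tensor_slice big_ord_recl /block_profile unlift_none; congr (_ * (_ * _)).
by apply: eq_bigr => j _; rewrite liftK.
Qed.

Lemma quantum_val_slices M :
  quantum_val M psi E = \sum_w1 \sum_w2 product_val M (block_profile w1 w2).
Proof.
rewrite quantum_val_sform (eq_sform _ (fun u => esym (sum_slice psi u))
  (fun u => esym (sum_slice psi u))) sform_suml; apply: eq_bigr => w1 _.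
by rewrite sform_sumr; apply: eq_bigr => w2 _; rewrite sform_obs_kernel_slice.
Qed.

Lemma sum_block_profile_tail w1 w2 j x :
  \sum_a block_profile w1 w2 (lift ord0 j) x a = (w1 j == w2 j)%:R.
Proof. by rewrite /block_profile liftK povm_entry_sum. Qed.

Lemma sum_block_profile_head w1 w2 x :
  \sum_a block_profile w1 w2 ord0 x a =
  sform (head_kernel 1%:M) (slice w1 psi) (slice w2 psi).
Proof. by rewrite /block_profile unlift_none sum_sform_head_kernel (E_povm x).2. Qed.

Lemma product_val_block_diag_le (G : bell_functional C nX nA) om w :
  (forall x a, 0 <= G x a) -> classical_ub G om ->
  `|product_val G (block_profile w w)| <= slice_mass w * om.
Proof.
move=> G_ge0 G_ub; pose p (i : 'I_k.+1) := if unlift ord0 i is Some _ then 1 else slice_mass w.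
have -> : slice_mass w = \prod_i p i.
  by rewrite big_ord_recl /p unlift_none big1 ?mulr1 // => j _; rewrite liftK.
apply: classical_ub_scaled => // i; case: (unliftP ord0 i) => [j|] ->.
- by move=> x a; rewrite /block_profile liftK; apply/psd_diag_ge0/(E_povm x).1.
- by move=> x a; rewrite /block_profile unlift_none; apply/psd_kernel_head/(E_povm x).1.
- by move=> x; rewrite sum_block_profile_tail // /p liftK eqxx.
- by move=> x; rewrite sum_block_profile_head // /p unlift_none.
- by rewrite /p liftK ler01.
- by rewrite /p unlift_none slice_mass_ge0.
Qed.

Lemma quantum_val_game_le (G : bell_functional C nX nA) om :
  (forall x a, 0 <= G x a) -> classical_ub G om ->
  `|quantum_val G psi E| <= (m ^ k)%:R * om.
Proof.
move=> G_ge0 G_ub.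
have K_psd : psd_kernel (obs_kernel G).
  move=> f; rewrite sform_obs_kernel; apply: sumr_ge0 => x _; apply: sumr_ge0 => a _.
  by rewrite mulr_ge0 // psd_kernel_tensor // => i; apply: (E_povm (x i)).1.
rewrite ger0_norm ?quantum_val_sform //.
rewrite (eq_sform _ (fun u => esym (sum_slice psi u)) (fun u => esym (sum_slice psi u))).
apply: le_trans (sform_sum_le _ K_psd) _.
rewrite card_ffun !card_ord ler_wpM2l ?ler0n // -[om]mul1r -sum_slice_mass.
rewrite mulr_suml; apply: ler_sum => w _.
rewrite -(ger0_norm (K_psd (slice w psi))) sform_obs_kernel_slice.
exact: product_val_block_diag_le.
Qed.

Definition real_block_profile (b : {ffun 'I_k -> bool}) (w1 w2 : W) : local_profile C nX nA :=
  fun i x a => if unlift ord0 i is Some j then reim (b j) (E i x a (w1 j) (w2 j))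
               else 'Re (phase b * block_profile w1 w2 i x a).
Arguments real_block_profile : clear implicits.

Lemma Re_product_val_block (M : bell_functional C nX nA) w1 w2 :
  (forall x a, M x a \is Num.real) ->
  'Re (product_val M (block_profile w1 w2)) =
  \sum_b product_val M (real_block_profile b w1 w2).
Proof.
move=> M_real.
transitivity (\sum_x \sum_a M x a * \sum_b \prod_i real_block_profile b w1 w2 i (x i) (a i)).
  rewrite raddf_sum; apply: eq_bigr => x _; rewrite raddf_sum; apply: eq_bigr => a _ /=.
  rewrite ReMl //; congr (_ * _); rewrite big_ord_recl Re_mul_prod.
  apply: eq_bigr => b _; rewrite big_ord_recl /real_block_profile unlift_none.
  by congr (_ * _); apply: eq_bigr => j _; rewrite liftK /block_profile liftK.
under eq_bigr => x _ do under eq_bigr => a _ do rewrite mulr_sumr.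
under eq_bigr => x _ do rewrite exchange_big /=.
by rewrite exchange_big.
Qed.

Lemma normr_sform_head_slice_le A w1 w2 : psd A ->
  `|sform (head_kernel A) (slice w1 psi) (slice w2 psi)| <=
  (sform (head_kernel A) (slice w1 psi) (slice w1 psi)
   + sform (head_kernel A) (slice w2 psi) (slice w2 psi)) / 2%:R.
Proof.
by move=> pA; apply: normr_sform_le (hermitian_kernel_head pA) (psd_kernel_head pA).
Qed.

Lemma sum_normr_real_block_tail_le b w1 w2 j x :
  \sum_a `|real_block_profile b w1 w2 (lift ord0 j) x a| <= 1.
Proof.
rewrite /real_block_profile liftK.
apply: (le_trans (ler_sum _ (fun a _ => le_trans (normr_reim_le _ _)
          (normr_psd_entry_le _ _ ((E_povm x).1 a))))).
rewrite -mulr_suml big_split /= !povm_entry_sum !eqxx.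
by rewrite -(natrD _ 1 1) divff // pnatr_eq0.
Qed.

Lemma sum_normr_real_block_head_le b w1 w2 x :
  \sum_a `|real_block_profile b w1 w2 ord0 x a|
    <= (slice_mass w1 + slice_mass w2) / 2%:R.
Proof.
rewrite /real_block_profile /block_profile unlift_none.
apply: (le_trans (ler_sum _ (fun a _ => le_trans (normr_Re_phase_le _ _)
          (normr_sform_head_slice_le _ _ ((E_povm x).1 a))))).
by rewrite -mulr_suml big_split /= !sum_sform_head_kernel (E_povm x).2.
Qed.

Lemma product_val_real_block_le (M : bell_functional C nX nA) om b w1 w2 :
  classical_ub M om ->
  `|product_val M (real_block_profile b w1 w2)|
    <= (slice_mass w1 + slice_mass w2) / 2%:R * om.
Proof.
move=> M_ub; set mean := (slice_mass w1 + slice_mass w2) / 2%:R.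
pose N (i : 'I_k.+1) := if unlift ord0 i is Some _ then 1 else mean.
pose s (i : 'I_k.+1) := if unlift ord0 i is Some j then reim (b j) (w1 j == w2 j)%:R
  else 'Re (phase b * sform (head_kernel 1%:M) (slice w1 psi) (slice w2 psi)).
have -> : mean = \prod_i N i.
  by rewrite big_ord_recl /N unlift_none big1 ?mulr1 // => j _; rewrite liftK.
apply: (classical_ub_signed M_ub (s := s)) => [|i|i|i|i|i].
- exact: povm_answers_gt0.
- case: (unliftP ord0 i) => [j|] -> x a; rewrite /real_block_profile ?liftK ?unlift_none.
    exact: reim_real.
  exact: Creal_Re.
- case: (unliftP ord0 i) => [j|] -> x; rewrite /real_block_profile /s ?liftK ?unlift_none.
    by rewrite -reim_sum povm_entry_sum.
  by rewrite -raddf_sum -mulr_sumr sum_block_profile_head.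
- case: (unliftP ord0 i) => [j|] -> x; rewrite /N ?liftK ?unlift_none.
    exact: sum_normr_real_block_tail_le.
  exact: sum_normr_real_block_head_le.
- case: (unliftP ord0 i) => [j|] ->; rewrite /s ?liftK ?unlift_none.
    exact: reim_real.
  exact: Creal_Re.
case: (unliftP ord0 i) => [j|] ->; rewrite /s /N ?liftK ?unlift_none.
  apply: le_trans (normr_reim_le _ _) _.
  by case: eqP; rewrite ?normr1 ?normr0 ?ler01.
exact: le_trans (normr_Re_phase_le _ _) (normr_sform_head_slice_le _ _ (psd1 _ _)).
Qed.

Lemma hermitian_obs_kernel (M : bell_functional C nX nA) :
  (forall x a, M x a \is Num.real) -> hermitian_kernel (obs_kernel M).
Proof.
move=> M_real u v; rewrite /obs_kernel rmorph_sum; apply: eq_bigr => x _.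
rewrite rmorph_sum; apply: eq_bigr => a _; rewrite rmorphM /= conj_Creal //.
rewrite rmorph_prod; congr (_ * _); apply: eq_bigr => i _.
exact: hermitian_kernel_mx ((E_povm (x i)).1 (a i)) _ _.
Qed.

Lemma quantum_val_bell_le (M : bell_functional C nX nA) om :
  (forall x a, M x a \is Num.real) -> classical_ub M om ->
  `|quantum_val M psi E| <= (2 ^ k)%:R * ((m ^ k)%:R * om).
Proof.
move=> M_real M_ub.
have qv_real : 'Re (quantum_val M psi E) = quantum_val M psi E.
  apply/Creal_ReP/CrealP.
  by rewrite quantum_val_sform sform_conj //; apply: hermitian_obs_kernel.
have mass_sum : \sum_(w1 : W) \sum_(w2 : W) (slice_mass w1 + slice_mass w2) / 2%:R
                = (m ^ k)%:R.
  under eq_bigr => w1 _ do rewrite -mulr_suml big_split /= sumr_const sum_slice_mass.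
  rewrite -mulr_suml big_split /= sumrMnl sum_slice_mass sumr_const card_ffun !card_ord.
  by field.
have bound_sum : (2 ^ k)%:R * ((m ^ k)%:R * om) = \sum_(w1 : W) \sum_(w2 : W)
    \sum_(b : {ffun 'I_k -> bool}) (slice_mass w1 + slice_mass w2) / 2%:R * om.
  rewrite -mass_sum mulr_suml mulr_sumr; apply: eq_bigr => w1 _.
  rewrite mulr_suml mulr_sumr; apply: eq_bigr => w2 _.
  by rewrite sumr_const card_ffun card_bool card_ord mulr_natl.
rewrite bound_sum -qv_real quantum_val_slices raddf_sum (le_trans (ler_norm_sum _ _ _)) //=.
apply: ler_sum => w1 _; rewrite raddf_sum (le_trans (ler_norm_sum _ _ _)) //=.
apply: ler_sum => w2 _; rewrite Re_product_val_block // (le_trans (ler_norm_sum _ _ _)) //.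
apply: ler_sum => b _; exact: product_val_real_block_le.
Qed.

End QuantumBounds.

Theorem mainTheorem8 (C : numClosedFieldType) (k : nat) (hk : (2 <= k)%N)
    (d : nat) (hd : (1 <= d)%N) :
  (forall (nX nA : 'I_k -> nat) (G : bell_functional C nX nA),
     (forall x a, 0 <= G x a) ->
     forall w : C, classical_ub G w ->
     quantum_bounded G d ((d%:R : C) ^+ (k - 1) * w))
  /\
  (forall (nX nA : 'I_k -> nat) (M : bell_functional C nX nA),
     (forall x a, M x a \is Num.real) ->
     forall w : C, classical_ub M w ->
     quantum_bounded M d (((2 * d)%N%:R : C) ^+ (k - 1) * w)).
Proof.
case: k hk => [//|k] k_gt0; rewrite subn1 /=.
split=> [nX nA G G_ge0 w G_ub | nX nA M M_real w M_ub] m psi E m_le_d psi_unit E_povm.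
- have w_ge0 := classical_ub_ge0 G_ub (povm_answers_gt0 psi_unit E_povm).
  apply: le_trans (quantum_val_game_le psi_unit E_povm G_ge0 G_ub) _.
  by rewrite ler_wpM2r // -natrX ler_nat leq_exp2r.
- have w_ge0 := classical_ub_ge0 M_ub (povm_answers_gt0 psi_unit E_povm).
  apply: le_trans (quantum_val_bell_le psi_unit E_povm M_real M_ub) _.
  rewrite mulrA -natrM -expnMn ler_wpM2r // -natrX ler_nat.
  by rewrite leq_exp2r // leq_mul2l.
Qed.
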